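(* Let $P$ be a finite path producible by a tile assembly system $\mathcal T=(T,\sigma,1)$ such that the last tile of $P$ is the unique easternmost tile of $\sigma\cup\mathrm{asm}(P)$. Then either (a) all glues of $P$ that are visible from the north point east, or (b) all glues of $P$ that are visible from the south point east.
   Context: aTAM at temperature 1: $T$ finite set of tile types; tiles $((x,y),t)\in\mathbb Z^2\times T$; adjacent tiles interact if abutting glues have equal type and strength $\ge1$; $\mathcal T=(T,\sigma,1)$ with finite connected seed $\sigma$; producible assemblies grow from $\sigma$ by single tile additions interacting with an existing tile. A path is a sequence $P=P_0P_1\dots$ of tiles with pairwise distinct positions, consecutive ones adjacent and interacting; $\mathrm{asm}(P)$ is the set of its tiles. $P$ is producible if its tiles avoid the positions of $\sigma$, $\sigma\cup\mathrm{asm}(P)$ is producible, and $P_0$ interacts with a tile of $\sigma$. ''Easternmost'' means largest $x$-coordinate. $\mathrm{glue}_P(a)$ ($0\le a\le|P|-2$) is the glue between $P_a,P_{a+1}$, with position the midpoint of the segment $\mathrm{pos}(P_a)\mathrm{pos}(P_{a+1})$ and direction east/west/north/south according to $\mathrm{pos}(P_{a+1})-\mathrm{pos}(P_a)$ being $(1,0),(-1,0),(0,1),(0,-1)$. $\mathrm{emb}(P)$ is the polygonal curve through the positions of $P$. A glue pointing east or west is visible from the south (resp. north) if the vertical ray from its position downward (resp. upward) meets neither $\mathrm{emb}(P)$ nor $\sigma$ (tile positions or unit segments between adjacent positions of $\sigma$); only east- or west-pointing glues can be visible from the north or south. *)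

From Stdlib Require Import ZArith Reals List Relations.
Open Scope Z_scope.

Inductive dir := North | East | South | West.

Definition dvec (d : dir) : Z * Z :=
  match d with
  | North => (0, 1) | East => (1, 0) | South => (0, -1) | West => (-1, 0)
  end.

Definition opp (d : dir) : dir :=
  match d with North => South | East => West | South => North | West => East end.

Definition pos := (Z * Z)%type.
Definition padd (p q : pos) : pos := (fst p + fst q, snd p + snd q).

(** A glue is a pair (label, strength); a tile type assigns a glue to each side. *)
Definition glue := (nat * nat)%type.
Record ttype := { tglue : dir -> glue }.

Definition tile := (pos * ttype)%type.
Definition tpos (t : tile) : pos := fst t.
Definition ttyp (t : tile) : ttype := snd t.

Definition interacts (a b : tile) : Prop :=
  exists d, tpos b = padd (tpos a) (dvec d)
         /\ tglue (ttyp a) d = tglue (ttyp b) (opp d)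
         /\ (1 <= snd (tglue (ttyp a) d))%nat.

Definition assembly := pos -> option ttype.

Definition pos_eq_dec (p q : pos) : {p = q} + {p <> q}.
Proof. decide equality; apply Z.eq_dec. Defined.

Definition upd (a : assembly) (p : pos) (t : ttype) : assembly :=
  fun q => if pos_eq_dec q p then Some t else a q.

Definition in_asm (a : assembly) (t : tile) : Prop := a (tpos t) = Some (ttyp t).

Definition over (T : list ttype) (a : assembly) : Prop :=
  forall p t, a p = Some t -> In t T.

Definition finite_asm (a : assembly) : Prop :=
  exists l : list pos, forall p, a p <> None -> In p l.

Definition adjacent (p q : pos) : Prop := exists d, q = padd p (dvec d).

Definition grid_connected (a : assembly) : Prop :=
  forall p q, a p <> None -> a q <> None ->
    clos_refl_trans pos (fun u v => a u <> None /\ a v <> None /\ adjacent u v) p q.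

Definition valid_seed (T : list ttype) (sigma : assembly) : Prop :=
  over T sigma /\ finite_asm sigma /\ grid_connected sigma.

(** Single-tile additions at temperature 1. *)
Inductive produced (T : list ttype) (sigma : assembly) : assembly -> Prop :=
| produced_seed : produced T sigma sigma
| produced_step : forall a p t,
    produced T sigma a -> a p = None -> In t T ->
    (exists u, in_asm a u /\ interacts (p, t) u) ->
    produced T sigma (upd a p t).

(** Producible assemblies (assemblies are compared extensionally). *)
Definition producible (T : list ttype) (sigma a : assembly) : Prop :=
  exists b, produced T sigma b /\ forall p, a p = b p.

Definition dflt_tile : tile := ((0, 0), {| tglue := fun _ => (0%nat, 0%nat) |}).
Definition tileAt (P : list tile) (i : nat) : tile := nth i P dflt_tile.

Definition is_path (T : list ttype) (P : list tile) : Prop :=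
  (forall t, In t P -> In (ttyp t) T)
  /\ NoDup (map tpos P)
  /\ (forall i, (S i < length P)%nat -> interacts (tileAt P i) (tileAt P (S i))).

(** The union sigma ∪ asm(P) (the tiles of P lie outside sigma). *)
Fixpoint asm_of (P : list tile) : assembly :=
  match P with
  | nil => fun _ => None
  | t :: P' => fun q => if pos_eq_dec q (tpos t) then Some (ttyp t) else asm_of P' q
  end.

Definition union_asm (sigma : assembly) (P : list tile) : assembly :=
  fun q => match sigma q with Some t => Some t | None => asm_of P q end.

Definition producible_path (T : list ttype) (sigma : assembly) (P : list tile) : Prop :=
  is_path T P
  /\ (forall t, In t P -> sigma (tpos t) = None)
  /\ producible T sigma (union_asm sigma P)
  /\ (exists P0 rest, P = P0 :: rest /\ exists u, in_asm sigma u /\ interacts P0 u).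

Open Scope R_scope.

Definition point := (R * R)%type.
Definition rpt (p : pos) : point := (IZR (fst p), IZR (snd p)).

Definition on_seg (p q : pos) (z : point) : Prop :=
  exists s, 0 <= s <= 1
    /\ fst z = IZR (fst p) + s * (IZR (fst q) - IZR (fst p))
    /\ snd z = IZR (snd p) + s * (IZR (snd q) - IZR (snd p)).

Definition in_emb (P : list tile) (z : point) : Prop :=
  (exists t, In t P /\ z = rpt (tpos t))
  \/ (exists i, (S i < length P)%nat /\ on_seg (tpos (tileAt P i)) (tpos (tileAt P (S i))) z).

Definition in_seed_geom (sigma : assembly) (z : point) : Prop :=
  (exists p, sigma p <> None /\ z = rpt p)
  \/ (exists p q, sigma p <> None /\ sigma q <> None /\ adjacent p q /\ on_seg p q z).

Definition glue_dir (P : list tile) (a : nat) (d : dir) : Prop :=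
  (S a < length P)%nat /\ tpos (tileAt P (S a)) = padd (tpos (tileAt P a)) (dvec d).

Definition glue_pt (P : list tile) (a : nat) : point :=
  ((IZR (fst (tpos (tileAt P a))) + IZR (fst (tpos (tileAt P (S a))))) / 2,
   (IZR (snd (tpos (tileAt P a))) + IZR (snd (tpos (tileAt P (S a))))) / 2).

Definition horizontal (d : dir) : Prop := d = East \/ d = West.

Definition visible_south (sigma : assembly) (P : list tile) (a : nat) : Prop :=
  (exists d, glue_dir P a d /\ horizontal d)
  /\ forall s, 0 < s ->
       let z := (fst (glue_pt P a), snd (glue_pt P a) - s) in
       ~ in_emb P z /\ ~ in_seed_geom sigma z.

Definition visible_north (sigma : assembly) (P : list tile) (a : nat) : Prop :=
  (exists d, glue_dir P a d /\ horizontal d)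
  /\ forall s, 0 < s ->
       let z := (fst (glue_pt P a), snd (glue_pt P a) + s) in
       ~ in_emb P z /\ ~ in_seed_geom sigma z.

Close Scope R_scope.

Definition last_unique_easternmost (sigma : assembly) (P : list tile) : Prop :=
  exists lt rest, P = rest ++ lt :: nil /\
    forall q, union_asm sigma P q <> None -> q <> tpos lt ->
      (fst q < fst (tpos lt))%Z.

From Stdlib Require Import ZArith Reals List Relations Lia Lra Classical.
Open Scope Z_scope.

(* Suppose glue i of P is visible from the north and glue j from the south and
   neither points east; being horizontal, both point west.  If i = j, every
   horizontal edge of P crossing the column of the glue lies at its height, so
   P, which continues west of that column and ends east of it (its last tile is
   easternmost), could only cross back through the glue edge itself.  If i < j,
   the upward ray from glue i, the part of P between the two glues and the
   downward ray from glue j form a bi-infinite simple curve; right after glue j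
   the path is on its western side, its last tile is on its eastern side, and
   the rest of the path never crosses the curve.  The case i > j is the case
   i < j reflected in the x-axis.  Sides of curves are computed as crossing
   parities. *)

Ltac case_Zbool := repeat match goal with
  | |- context [Z.eqb ?a ?b] => destruct (Z.eqb_spec a b)
  | |- context [Z.ltb ?a ?b] => destruct (Z.ltb_spec a b)
  | |- context [Z.leb ?a ?b] => destruct (Z.leb_spec a b)
  end.

Lemma pair_neq (a b c d : Z) : (a, b) <> (c, d) -> ~ (a = c /\ b = d).
Proof. intros H [-> ->]; apply H; reflexivity. Qed.

Ltac solve_Zbool :=
  repeat match goal with H : (_, _) <> (_, _) |- _ => apply pair_neq in H end;
  case_Zbool; simpl; first [reflexivity | exfalso; lia].

Lemma chain_eq {A : Type} (g : nat -> A) lo hi :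
  (lo <= hi)%nat -> (forall e, (lo <= e < hi)%nat -> g e = g (S e)) -> g lo = g hi.
Proof.
  intros Hle Hstep. induction hi as [|hi IH].
  - now replace lo with 0%nat by lia.
  - destruct (Nat.eq_dec lo (S hi)) as [->|Hne]; [reflexivity|].
    rewrite IH; [apply Hstep; lia | lia | intros; apply Hstep; lia].
Qed.

Fixpoint xor_range (f : nat -> bool) (lo n : nat) : bool :=
  match n with O => false | S n' => xorb (f lo) (xor_range f (S lo) n') end.

Lemma xor_range_ext f g lo n :
  (forall e, (lo <= e < lo + n)%nat -> f e = g e) -> xor_range f lo n = xor_range g lo n.
Proof.
  revert lo; induction n as [|n IH]; intros lo H; simpl; [reflexivity|].
  rewrite H, IH by (intros; try apply H; lia). reflexivity.
Qed.

Lemma xor_range_true f lo n :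
  xor_range f lo n = true -> exists e, (lo <= e < lo + n)%nat /\ f e = true.
Proof.
  revert lo; induction n as [|n IH]; intros lo H; simpl in H; [discriminate|].
  destruct (f lo) eqn:Hf.
  - exists lo; split; [lia | exact Hf].
  - destruct (IH (S lo) H) as [e [He Hfe]]. exists e; split; [lia | exact Hfe].
Qed.

Lemma xor_range_false f lo n :
  (forall e, (lo <= e < lo + n)%nat -> f e = false) -> xor_range f lo n = false.
Proof.
  intros H. destruct (xor_range f lo n) eqn:E; [|reflexivity].
  destruct (xor_range_true f lo n E) as [e [He Hfe]]. now rewrite H in Hfe.
Qed.

Lemma xor_range_xorb f g lo n :
  xor_range (fun e => xorb (f e) (g e)) lo n = xorb (xor_range f lo n) (xor_range g lo n).
Proof.
  revert lo; induction n as [|n IH]; intros lo; simpl; [reflexivity|].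
  rewrite IH. destruct (f lo), (g lo), (xor_range f (S lo) n), (xor_range g (S lo) n); reflexivity.
Qed.

Lemma xor_range_telescope h lo n :
  xor_range (fun e => xorb (h e) (h (S e))) lo n = xorb (h lo) (h (lo + n)%nat).
Proof.
  revert lo; induction n as [|n IH]; intros lo; simpl.
  - rewrite Nat.add_0_r. now destruct (h lo).
  - rewrite IH. replace (S lo + n)%nat with (lo + S n)%nat by lia.
    now destruct (h lo), (h (S lo)), (h (lo + S n)%nat).
Qed.

(* The edge [a b] crosses the open upward ray from (fst p + 1/2, snd p). *)
Definition crosses_up_ray (a b p : Z * Z) : bool :=
  (snd a =? snd b) && (Z.min (fst a) (fst b) =? fst p) && (snd p <? snd a).

Definition above_east_of (a p : Z * Z) : bool := (fst a =? fst p + 1) && (snd p <? snd a).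

(* The edge [a b] crosses the vertical line x = c + 1/2. *)
Definition crosses_column (a b : Z * Z) (c : Z) : bool := xorb (fst a <=? c) (fst b <=? c).

Lemma crosses_up_ray_shift_north a b p :
  adjacent a b -> a <> (fst p, snd p + 1) -> b <> (fst p, snd p + 1) ->
  crosses_up_ray a b p = crosses_up_ray a b (fst p, snd p + 1).
Proof.
  intros [d ->] Ha Hb. destruct a as [ax ay], p as [px py].
  destruct d; unfold crosses_up_ray, padd in *; simpl in *; solve_Zbool.
Qed.

Lemma crosses_up_ray_shift_east a b p :
  adjacent a b -> a <> (fst p + 1, snd p) -> b <> (fst p + 1, snd p) ->
  xorb (crosses_up_ray a b p) (crosses_up_ray a b (fst p + 1, snd p))
  = xorb (above_east_of a p) (above_east_of b p).
Proof.
  intros [d ->] Ha Hb. destruct a as [ax ay], p as [px py].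
  destruct d; unfold crosses_up_ray, above_east_of, padd in *; simpl in *; solve_Zbool.
Qed.

Lemma crosses_up_ray_column a b p :
  adjacent a b -> a <> p -> b <> p ->
  (snd a = snd b -> Z.min (fst a) (fst b) = fst p -> snd p <= snd a) ->
  crosses_up_ray a b p = crosses_column a b (fst p).
Proof.
  intros [d ->] Ha Hb Hclear. destruct a as [ax ay], p as [px py].
  destruct d; unfold crosses_up_ray, crosses_column, padd in *; simpl in *; solve_Zbool.
Qed.

Lemma crosses_column_horizontal a b c :
  adjacent a b -> crosses_column a b c = true ->
  snd a = snd b /\ Z.min (fst a) (fst b) = c /\ (a = (c + 1, snd a) \/ b = (c + 1, snd a)).
Proof.
  intros [d ->] Hc. destruct a as [ax ay].
  destruct d; unfold crosses_column, padd in *; simpl in *; revert Hc; case_Zbool; simpl;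
    intros Hc; try discriminate; try lia.
  - split; [lia|]. split; [lia|]. right. f_equal; lia.
  - split; [lia|]. split; [lia|]. left. f_equal; lia.
Qed.

Definition up_ray_parity (q : nat -> Z * Z) (lo hi : nat) (p : Z * Z) : bool :=
  xor_range (fun e => crosses_up_ray (q e) (q (S e)) p) lo (hi - lo).

Section UpRayParity.

Variable q : nat -> Z * Z.
Variables lo hi : nat.
Hypothesis lo_le_hi : (lo <= hi)%nat.
Hypothesis q_adj : forall e, (lo <= e < hi)%nat -> adjacent (q e) (q (S e)).

Lemma up_ray_parity_shift_north p :
  (forall e, (lo <= e <= hi)%nat -> q e <> (fst p, snd p + 1)) ->
  up_ray_parity q lo hi p = up_ray_parity q lo hi (fst p, snd p + 1).
Proof.
  intros Havoid. apply xor_range_ext. intros e He.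
  apply crosses_up_ray_shift_north; [apply q_adj | apply Havoid | apply Havoid]; lia.
Qed.

Lemma up_ray_parity_shift_east p :
  (forall e, (lo <= e <= hi)%nat -> q e <> (fst p + 1, snd p)) ->
  xorb (up_ray_parity q lo hi p) (up_ray_parity q lo hi (fst p + 1, snd p))
  = xorb (above_east_of (q lo) p) (above_east_of (q hi) p).
Proof.
  intros Havoid. unfold up_ray_parity. rewrite <- xor_range_xorb.
  rewrite (xor_range_ext _ (fun e => xorb (above_east_of (q e) p) (above_east_of (q (S e)) p))).
  - rewrite xor_range_telescope. now replace (lo + (hi - lo))%nat with hi by lia.
  - intros e He. apply crosses_up_ray_shift_east; [apply q_adj | apply Havoid | apply Havoid]; lia.
Qed.

Lemma up_ray_parity_column p :
  (forall e, (lo <= e <= hi)%nat -> q e <> p) ->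
  (forall e, (lo <= e < hi)%nat -> snd (q e) = snd (q (S e)) ->
     Z.min (fst (q e)) (fst (q (S e))) = fst p -> snd p <= snd (q e)) ->
  up_ray_parity q lo hi p = xorb (fst (q lo) <=? fst p) (fst (q hi) <=? fst p).
Proof.
  intros Havoid Hclear. unfold up_ray_parity.
  rewrite (xor_range_ext _ (fun e => crosses_column (q e) (q (S e)) (fst p))).
  - unfold crosses_column. rewrite xor_range_telescope.
    now replace (lo + (hi - lo))%nat with hi by lia.
  - intros e He. apply crosses_up_ray_column;
      [apply q_adj | apply Havoid | apply Havoid | apply Hclear]; lia.
Qed.

End UpRayParity.

Lemma up_ray_parity_east_of q lo hi p :
  (forall e, (lo <= e < hi)%nat -> fst (q e) < fst p) -> up_ray_parity q lo hi p = false.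
Proof.
  intros Heast. apply xor_range_false. intros e He.
  specialize (Heast e ltac:(lia)). unfold crosses_up_ray.
  destruct (Z.eqb_spec (Z.min (fst (q e)) (fst (q (S e)))) (fst p)); [lia|].
  now rewrite Bool.andb_false_r.
Qed.

Section Separation.

Variable q : nat -> Z * Z.
Variable n : nat.
Hypothesis q_inj : forall a b, (a < n)%nat -> (b < n)%nat -> q a = q b -> a = b.
Hypothesis q_adj : forall e, (S e < n)%nat -> adjacent (q e) (q (S e)).
Hypothesis q_last_east : forall e, (S e < n)%nat -> fst (q e) < fst (q (n - 1)%nat).

Definition west_step (i : nat) : Prop := q (S i) = (fst (q i) - 1, snd (q i)).

(* No horizontal edge of the walk crosses the line x = c + 1/2 strictly above
   (resp. below) height y. *)
Definition up_ray_clear (c y : Z) : Prop :=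
  forall e, (S e < n)%nat -> snd (q e) = snd (q (S e)) ->
    Z.min (fst (q e)) (fst (q (S e))) = c -> snd (q e) <= y.

Definition down_ray_clear (c y : Z) : Prop :=
  forall e, (S e < n)%nat -> snd (q e) = snd (q (S e)) ->
    Z.min (fst (q e)) (fst (q (S e))) = c -> y <= snd (q e).

Lemma west_step_clear_up_and_down_absurd i :
  (S i < n)%nat -> west_step i ->
  up_ray_clear (fst (q i) - 1) (snd (q i)) -> down_ray_clear (fst (q i) - 1) (snd (q i)) ->
  False.
Proof.
  intros Hi Hwest Hup Hdown. set (c := fst (q i) - 1).
  (* q (S i) is west of the column and q (n - 1) east of it. *)
  assert (Hodd : xor_range (fun e => crosses_column (q e) (q (S e)) c) (S i) (n - 1 - S i)%nat = true).
  { unfold crosses_column. rewrite xor_range_telescope.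
    replace (S i + (n - 1 - S i))%nat with (n - 1)%nat by lia.
    pose proof (q_last_east i Hi). rewrite Hwest. subst c. simpl. solve_Zbool. }
  destruct (xor_range_true _ _ _ Hodd) as [e [He Hcross]].
  destruct (crosses_column_horizontal _ _ _ (q_adj e ltac:(lia)) Hcross) as [Hy [Hmin Hend]].
  assert (Hqi : (c + 1, snd (q e)) = q i).
  { pose proof (Hup e ltac:(lia) Hy Hmin). pose proof (Hdown e ltac:(lia) Hy Hmin).
    subst c. destruct (q i); simpl in *. f_equal; lia. }
  destruct Hend as [E|E]; rewrite Hqi in E; apply q_inj in E; lia.
Qed.

Section Curve.

Variables i j : nat.
Hypothesis i_lt_j : (i < j)%nat.
Hypothesis j_lt_n : (S j < n)%nat.
Hypothesis west_i : west_step i.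

(* The upward ray from the midpoint of glue [i], the walk from q (S i) to q j
   and the downward ray from the midpoint of glue [j] form a bi-infinite simple
   curve; [curve_side p] holds iff p lies on its eastern side.  It is a crossing
   parity along a path from p + (1/2, 0) going north, then east; the last two
   terms count the crossings with the upward ray of glue [i]. *)
Definition curve_side (p : Z * Z) : bool :=
  xorb (xorb (up_ray_parity q (S i) j p) (above_east_of (q i) p)) (fst (q i) <=? fst p).

Let segment_adj : forall e, (S i <= e < j)%nat -> adjacent (q e) (q (S e)).
Proof. intros e He. apply q_adj. lia. Qed.

Lemma curve_side_step_north x y :
  (forall v, (S i <= v <= j)%nat -> q v <> (x, y + 1)) ->
  curve_side (x, y) = curve_side (x, y + 1).
Proof.
  intros Havoid. pose proof (Havoid (S i) ltac:(lia)) as Hnot_Si. rewrite west_i in Hnot_Si.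
  unfold curve_side. rewrite (up_ray_parity_shift_north q (S i) j ltac:(lia) segment_adj (x, y) Havoid).
  destruct (q i) as [xi yi]; unfold above_east_of; simpl in *.
  destruct (up_ray_parity q (S i) j (x, y + 1)); solve_Zbool.
Qed.

Lemma curve_side_step_east x y :
  (forall v, (S i <= v <= j)%nat -> q v <> (x, y) /\ q v <> (x + 1, y)) ->
  (x = fst (q i) - 1 -> y <= snd (q i)) ->
  (x = fst (q j) - 1 -> snd (q j) <= y) ->
  curve_side (x, y) = curve_side (x + 1, y).
Proof.
  intros Havoid Hclear_i Hclear_j.
  pose proof (Havoid (S i) ltac:(lia)) as [Hnot_Si _]. rewrite west_i in Hnot_Si.
  pose proof (up_ray_parity_shift_east q (S i) j ltac:(lia) segment_adj (x, y)
                (fun v Hv => proj2 (Havoid v Hv))) as Hshift.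
  rewrite west_i in Hshift. apply (f_equal (xorb (up_ray_parity q (S i) j (x, y)))) in Hshift.
  rewrite <- Bool.xorb_assoc_reverse, Bool.xorb_nilpotent, Bool.xorb_false_l in Hshift.
  unfold curve_side. simpl in Hshift |- *. rewrite Hshift.
  destruct (q i) as [xi yi], (q j) as [xj yj]; unfold above_east_of; simpl in *.
  destruct (up_ray_parity q (S i) j (x, y)); solve_Zbool.
Qed.

Hypothesis west_j : west_step j.
Hypothesis clear_i : up_ray_clear (fst (q i) - 1) (snd (q i)).
Hypothesis clear_j : down_ray_clear (fst (q j) - 1) (snd (q j)).

Lemma curve_side_walk_step e :
  (S j <= e)%nat -> (S e < n)%nat -> curve_side (q e) = curve_side (q (S e)).
Proof.
  intros He1 He2.
  assert (Havoid : forall v, (S i <= v <= j)%nat -> q v <> q e /\ q v <> q (S e)).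
  { intros v Hv; split; intro E; apply q_inj in E; lia. }
  pose proof (clear_i e He2) as Hclear_i. pose proof (clear_j e He2) as Hclear_j.
  destruct (q_adj e He2) as [d Hd]. rewrite Hd in *.
  destruct (q e) as [x y]. destruct d; unfold padd in *; simpl in *.
  - rewrite Z.add_0_r. apply curve_side_step_north. intros v Hv.
    rewrite <- (Z.add_0_r x). apply Havoid; exact Hv.
  - rewrite Z.add_0_r in *. rewrite Z.min_l in * by lia.
    apply curve_side_step_east; [exact Havoid | |]; intros; auto.
  - symmetry. replace y with (y + -1 + 1) at 2 by lia. rewrite Z.add_0_r in *.
    apply curve_side_step_north. intros v Hv. replace (y + -1 + 1) with y by lia. apply Havoid, Hv.
  - symmetry. replace x with (x + -1 + 1) at 2 by lia. rewrite Z.add_0_r in *.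
    rewrite Z.min_r in * by lia.
    apply curve_side_step_east.
    + intros v Hv. replace (x + -1 + 1) with x by lia. split; apply Havoid, Hv.
    + intros; auto.
    + intros; auto.
Qed.

Lemma curve_side_last : curve_side (q (n - 1)%nat) = true.
Proof.
  unfold curve_side.
  rewrite (up_ray_parity_east_of q (S i) j) by (intros; apply q_last_east; lia).
  pose proof (q_last_east i ltac:(lia)). unfold above_east_of. solve_Zbool.
Qed.

Lemma curve_side_after_j : curve_side (q (S j)) = false.
Proof.
  unfold curve_side. rewrite west_j.
  rewrite (up_ray_parity_column q (S i) j ltac:(lia) segment_adj).
  - pose proof (clear_i j j_lt_n) as Hj. rewrite west_i, west_j in *.
    assert (Hij : q i <> q j) by (intro E; apply q_inj in E; lia).
    destruct (q i) as [xi yi], (q j) as [xj yj]; unfold above_east_of; simpl in *.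
    rewrite Z.min_r in Hj by lia.
    destruct (Z.eq_dec xj xi); [specialize (Hj eq_refl ltac:(lia))|]; solve_Zbool.
  - intros v Hv E. rewrite <- west_j in E. apply q_inj in E; lia.
  - intros e He Hy Hmin. apply clear_j; [lia | exact Hy | exact Hmin].
Qed.

Lemma west_steps_clear_up_then_down_absurd : False.
Proof.
  assert (Hside : curve_side (q (S j)) = curve_side (q (n - 1)%nat)).
  { apply (chain_eq (fun e => curve_side (q e))); [lia|].
    intros e He. apply curve_side_walk_step; lia. }
  rewrite curve_side_after_j, curve_side_last in Hside. discriminate.
Qed.

End Curve.

End Separation.

Definition reflect_y (p : Z * Z) : Z * Z := (fst p, - snd p).

Lemma adjacent_reflect_y a b : adjacent a b -> adjacent (reflect_y a) (reflect_y b).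
Proof.
  intros [d ->]. destruct a as [x y]. unfold reflect_y, padd; simpl.
  destruct d; [exists South | exists East | exists North | exists West];
    unfold padd; simpl; f_equal; lia.
Qed.

Lemma west_steps_clear_up_and_down_absurd (q : nat -> Z * Z) (n i j : nat) :
  (forall a b, (a < n)%nat -> (b < n)%nat -> q a = q b -> a = b) ->
  (forall e, (S e < n)%nat -> adjacent (q e) (q (S e))) ->
  (forall e, (S e < n)%nat -> fst (q e) < fst (q (n - 1)%nat)) ->
  (S i < n)%nat -> (S j < n)%nat -> west_step q i -> west_step q j ->
  up_ray_clear q n (fst (q i) - 1) (snd (q i)) ->
  down_ray_clear q n (fst (q j) - 1) (snd (q j)) ->
  False.
Proof.
  intros Hinj Hadj Heast Hi Hj Hwi Hwj Hup Hdown.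
  destruct (lt_eq_lt_dec i j) as [[Hlt | <-] | Hgt].
  - exact (west_steps_clear_up_then_down_absurd q n Hinj Hadj Heast i j Hlt Hj Hwi Hwj Hup Hdown).
  - exact (west_step_clear_up_and_down_absurd q n Hinj Hadj Heast i Hi Hwi Hup Hdown).
  - (* Reflecting in the x-axis exchanges up-rays and down-rays. *)
    apply (west_steps_clear_up_then_down_absurd (fun e => reflect_y (q e)) n) with j i;
      unfold west_step, up_ray_clear, down_ray_clear, reflect_y in *; simpl; auto.
    + intros a b Ha Hb E. apply Hinj; auto.
      destruct (q a), (q b); simpl in E. injection E as E1 E2. f_equal; lia.
    + intros e He. exact (adjacent_reflect_y _ _ (Hadj e He)).
    + now rewrite Hwj.
    + now rewrite Hwi.
    + intros e He Hy Hmin. specialize (Hdown e He ltac:(lia) Hmin). lia.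
    + intros e He Hy Hmin. specialize (Hup e He ltac:(lia) Hmin). lia.
Qed.

Definition walk_of (P : list tile) (e : nat) : Z * Z := tpos (tileAt P e).

Lemma walk_of_inj P : NoDup (map tpos P) ->
  forall a b, (a < length P)%nat -> (b < length P)%nat -> walk_of P a = walk_of P b -> a = b.
Proof.
  intros Hnd a b Ha Hb E. apply (proj1 (NoDup_nth (map tpos P) (tpos dflt_tile)) Hnd);
    rewrite ?length_map; auto.
  rewrite !map_nth. exact E.
Qed.

Lemma walk_of_adjacent T P : is_path T P ->
  forall e, (S e < length P)%nat -> adjacent (walk_of P e) (walk_of P (S e)).
Proof.
  intros [_ [_ Hint]] e He. destruct (Hint e He) as [d [Hd _]]. exists d. exact Hd.
Qed.

Lemma asm_of_In P t : In t P -> asm_of P (tpos t) <> None.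
Proof.
  induction P as [|t' P IH]; simpl; [tauto|].
  intros [E|H]; destruct (pos_eq_dec (tpos t) (tpos t')); try congruence; auto.
Qed.

Lemma walk_of_last_east sigma P : NoDup (map tpos P) -> last_unique_easternmost sigma P ->
  forall e, (S e < length P)%nat -> fst (walk_of P e) < fst (walk_of P (length P - 1)).
Proof.
  intros Hnd [last [rest [HP Heast]]] e He.
  assert (Hlast : tileAt P (length P - 1) = last).
  { rewrite HP. unfold tileAt. rewrite length_app. simpl.
    replace (length rest + 1 - 1)%nat with (length rest) by lia. apply nth_middle. }
  unfold walk_of. rewrite Hlast. apply Heast.
  - unfold union_asm. destruct (sigma _); [discriminate|].
    apply asm_of_In, nth_In. lia.
  - rewrite <- Hlast. intro E. apply (walk_of_inj P Hnd) in E; lia.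
Qed.

Lemma glue_dir_west_step P a : glue_dir P a West -> west_step (walk_of P) a.
Proof.
  intros [_ H]. unfold west_step, walk_of. rewrite H. unfold padd; simpl. f_equal; lia.
Qed.

Lemma horizontal_glue_dir_west P a d :
  glue_dir P a d -> (exists d', glue_dir P a d' /\ horizontal d') -> d <> East ->
  glue_dir P a West.
Proof.
  intros [Ha Hd] [d' [[_ Hd'] Hh]] Hne.
  assert (Hvec : dvec d = dvec d').
  { rewrite Hd in Hd'. destruct (tpos (tileAt P a)). unfold padd in Hd'. simpl in Hd'.
    injection Hd' as E1 E2. destruct (dvec d), (dvec d'); simpl in *; f_equal; lia. }
  assert (d = d') as <- by (destruct d, d'; simpl in Hvec; congruence).
  destruct Hh as [-> | ->]; [contradiction | split; auto].
Qed.

Lemma in_emb_horizontal_edge P e z :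
  (S e < length P)%nat -> adjacent (walk_of P e) (walk_of P (S e)) ->
  snd (walk_of P e) = snd (walk_of P (S e)) ->
  fst z = (IZR (Z.min (fst (walk_of P e)) (fst (walk_of P (S e)))) + /2)%R ->
  snd z = IZR (snd (walk_of P e)) ->
  in_emb P z.
Proof.
  unfold walk_of. intros He [d Hd] Hy Hzx Hzy. right. exists e. split; [exact He|].
  exists (/2)%R. split; [lra|].
  destruct (tpos (tileAt P e)) as [ax ay], (tpos (tileAt P (S e))) as [bx by'].
  destruct z as [zx zy]. unfold padd in Hd. simpl in *.
  injection Hd as -> ->. destruct d; simpl in *; try lia.
  - rewrite Z.min_l in Hzx by lia. rewrite !plus_IZR in *. split; lra.
  - rewrite Z.min_r in Hzx by lia. rewrite !plus_IZR in *. split; lra.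
Qed.

Lemma visible_north_up_ray_clear T sigma P a :
  is_path T P -> glue_dir P a West -> visible_north sigma P a ->
  up_ray_clear (walk_of P) (length P) (fst (walk_of P a) - 1) (snd (walk_of P a)).
Proof.
  intros Hpath Hg [_ Hvis] e He Hy Hmin.
  pose proof (glue_dir_west_step P a Hg) as Hw. unfold west_step, walk_of in *.
  destruct (Z_le_gt_dec (snd (tpos (tileAt P e))) (snd (tpos (tileAt P a)))) as [|Hgt]; [assumption|].
  exfalso.
  destruct (Hvis (IZR (snd (tpos (tileAt P e)) - snd (tpos (tileAt P a))))) as [Hemb _].
  { apply IZR_lt. lia. }
  apply Hemb, (in_emb_horizontal_edge P e); unfold walk_of; auto.
  - exact (walk_of_adjacent T P Hpath e He).
  - unfold glue_pt; simpl. rewrite Hmin, Hw. simpl. rewrite minus_IZR. lra.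
  - unfold glue_pt; simpl. rewrite Hw. simpl. rewrite minus_IZR. lra.
Qed.

Lemma visible_south_down_ray_clear T sigma P a :
  is_path T P -> glue_dir P a West -> visible_south sigma P a ->
  down_ray_clear (walk_of P) (length P) (fst (walk_of P a) - 1) (snd (walk_of P a)).
Proof.
  intros Hpath Hg [_ Hvis] e He Hy Hmin.
  pose proof (glue_dir_west_step P a Hg) as Hw. unfold west_step, walk_of in *.
  destruct (Z_le_gt_dec (snd (tpos (tileAt P a))) (snd (tpos (tileAt P e)))) as [|Hgt]; [assumption|].
  exfalso.
  destruct (Hvis (IZR (snd (tpos (tileAt P a)) - snd (tpos (tileAt P e))))) as [Hemb _].
  { apply IZR_lt. lia. }
  apply Hemb, (in_emb_horizontal_edge P e); unfold walk_of; auto.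
  - exact (walk_of_adjacent T P Hpath e He).
  - unfold glue_pt; simpl. rewrite Hmin, Hw. simpl. rewrite minus_IZR. lra.
  - unfold glue_pt; simpl. rewrite Hw. simpl. rewrite minus_IZR. lra.
Qed.

Lemma west_glues_not_visible_north_and_south T sigma P a1 a2 :
  producible_path T sigma P -> last_unique_easternmost sigma P ->
  glue_dir P a1 West -> visible_north sigma P a1 ->
  glue_dir P a2 West -> visible_south sigma P a2 ->
  False.
Proof.
  intros [Hpath _] Hlast Hg1 Hv1 Hg2 Hv2. pose proof Hpath as [_ [Hnd _]].
  apply (west_steps_clear_up_and_down_absurd (walk_of P) (length P) a1 a2).
  - exact (walk_of_inj P Hnd).
  - exact (walk_of_adjacent T P Hpath).
  - exact (walk_of_last_east sigma P Hnd Hlast).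
  - exact (proj1 Hg1).
  - exact (proj1 Hg2).
  - exact (glue_dir_west_step P a1 Hg1).
  - exact (glue_dir_west_step P a2 Hg2).
  - exact (visible_north_up_ray_clear T sigma P a1 Hpath Hg1 Hv1).
  - exact (visible_south_down_ray_clear T sigma P a2 Hpath Hg2 Hv2).
Qed.

Theorem mainTheorem7 :
  forall (T : list ttype) (sigma : assembly) (P : list tile),
    valid_seed T sigma ->
    producible_path T sigma P ->
    last_unique_easternmost sigma P ->
    (forall a d, glue_dir P a d -> visible_north sigma P a -> d = East)
    \/ (forall a d, glue_dir P a d -> visible_south sigma P a -> d = East).
Proof.
  intros T sigma P _ Hpp Hlast.
  destruct (classic (exists a, glue_dir P a West /\ visible_north sigma P a))
    as [[a1 [Hg1 Hv1]] | Hnone].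
  - right. intros a d Hg Hv. apply NNPP. intro Hne.
    apply (west_glues_not_visible_north_and_south T sigma P a1 a); auto.
    exact (horizontal_glue_dir_west P a d Hg (proj1 Hv) Hne).
  - left. intros a d Hg Hv. apply NNPP. intro Hne.
    apply Hnone. exists a. split; [|exact Hv].
    exact (horizontal_glue_dir_west P a d Hg (proj1 Hv) Hne).
Qed.
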